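(* Let $\mathcal{K}$ be a convex cone in a finite-dimensional Euclidean space ${\mathbb E}$ and let ${\mathcal F}_t \unlhd \mathcal{K}$ be a face. Consider any sequence constructed as follows: ${\mathcal F}_0=\mathcal{K}$, and as long as there exists a vector $d_i$ with $d_i\in {\mathcal F}_i^*$, $d_i\notin {\mathcal F}_i^{\perp}$ and $d_i\perp {\mathcal F}_t$, choose such a $d_i$ and set ${\mathcal F}_{i+1}={\mathcal F}_i\cap d_i^{\perp}$; stop at the first index $d$ for which no such vector exists. Then this process stops after finitely many steps, and at termination ${\mathcal F}_d={\mathcal F}_t$.
   Context: For a set $S$, $S^*=\{y: \langle y,x\rangle\ge 0\ \forall x\in S\}$ is its dual cone and $S^\perp$ its orthogonal complement; $d\perp S$ means $\langle d,x\rangle=0$ for all $x\in S$. A face $f\unlhd \mathcal{K}$ is a convex subset $f\subseteq\mathcal{K}$ such that $x,y\in\mathcal{K}$, $\tfrac12(x+y)\in f$ imply $x,y\in f$. *)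

From mathcomp Require Import all_boot all_order all_algebra.
From mathcomp Require Import all_classical all_reals.
Set Implicit Arguments. Unset Strict Implicit. Unset Printing Implicit Defensive.
Import Order.TTheory GRing.Theory Num.Theory.
Local Open Scope ring_scope.

Section Defs.
Variables (R : realType) (n : nat).
Notation E := 'rV[R]_n.

Definition dotv (u v : E) : R := \sum_(i < n) u 0 i * v 0 i.

Definition cvx_set (S : E -> Prop) : Prop :=
  forall x y (t : R), S x -> S y -> 0 <= t -> t <= 1 -> S (t *: x + (1 - t) *: y).

Definition convex_cone (K : E -> Prop) : Prop :=
  forall x y (a b : R), K x -> K y -> 0 <= a -> 0 <= b -> K (a *: x + b *: y).

Definition dual_cone (S : E -> Prop) : E -> Prop :=
  fun y => forall x, S x -> 0 <= dotv y x.

Definition orth (S : E -> Prop) : E -> Prop :=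
  fun y => forall x, S x -> dotv y x = 0.

Definition hyp_perp (d : E) : E -> Prop := fun x => dotv d x = 0.

Definition is_face (K f : E -> Prop) : Prop :=
  (forall x, f x -> K x) /\ cvx_set f /\
  (forall x y, K x -> K y -> f ((2 : R)^-1 *: (x + y)) -> f x /\ f y).

Definition admissible (Ft F : E -> Prop) (d : E) : Prop :=
  dual_cone F d /\ ~ orth F d /\ orth Ft d.

Definition facial_step (Ft F G : E -> Prop) : Prop :=
  exists d, admissible Ft F d /\ G = (fun x => F x /\ hyp_perp d x).

End Defs.

(* Termination: the direction d_i lies outside F_i^perp while every earlier
   direction lies in it (since F_i is contained in d_j^perp for j < i), so the
   directions of any run are linearly independent and a run has at most
   dim E steps.

   Correctness: every F_i is a convex cone with F_t <= F_i <= K.  If the run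
   stops at F_d <> F_t, pick x in F_d \ F_t.  The cone F_d - F_t contains x
   but not -x (otherwise x + c lies in the face F_t for some c in F_d, forcing
   x into F_t), so it is not a linear subspace and therefore has a dual vector
   e which is positive somewhere on it.  Such an e is nonnegative on F_d,
   vanishes on F_t (as +-F_t lie in F_d - F_t) and is not orthogonal to F_d,
   i.e. e is admissible, contradicting termination.  The dual vector is built
   coordinate by coordinate, extending a dual vector of the slice
   {x_j = 0} by a supremum argument. *)
From mathcomp Require Import all_boot all_order all_algebra.
From mathcomp Require Import all_classical all_reals.
From mathcomp Require Import ring.
Set Implicit Arguments. Unset Strict Implicit. Unset Printing Implicit Defensive.
Import Order.TTheory GRing.Theory Num.Theory.
Local Open Scope ring_scope.

Section InnerProduct.
Variables (R : realType) (n : nat).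
Implicit Types (u v x y : 'rV[R]_n) (a : R).

Lemma dotvDr u x y : dotv u (x + y) = dotv u x + dotv u y.
Proof. by rewrite /dotv -big_split; apply: eq_bigr => i _; rewrite mxE mulrDr. Qed.

Lemma dotvZr u x a : dotv u (a *: x) = a * dotv u x.
Proof. by rewrite /dotv mulr_sumr; apply: eq_bigr => i _; rewrite mxE mulrCA. Qed.

Lemma dotvDl u v x : dotv (u + v) x = dotv u x + dotv v x.
Proof. by rewrite /dotv -big_split; apply: eq_bigr => i _; rewrite mxE mulrDl. Qed.

Lemma dotvZl u x a : dotv (a *: u) x = a * dotv u x.
Proof. by rewrite /dotv mulr_sumr; apply: eq_bigr => i _; rewrite mxE mulrA. Qed.

Lemma dotvNr u x : dotv u (- x) = - dotv u x.
Proof. by rewrite -scaleN1r dotvZr mulN1r. Qed.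

Lemma dotvBr u x y : dotv u (x - y) = dotv u x - dotv u y.
Proof. by rewrite dotvDr dotvNr. Qed.

Lemma dotv0l x : dotv 0 x = 0.
Proof. by rewrite -(scale0r 0) dotvZl mul0r. Qed.

Lemma dotv_delta (j : 'I_n) x : dotv (delta_mx 0 j) x = x 0 j.
Proof.
rewrite /dotv (bigD1 j) //= big1 ?addr0; first by rewrite mxE !eqxx mul1r.
by move=> i /negbTE ij; rewrite mxE ij andbF mul0r.
Qed.

End InnerProduct.

Section Termination.
Variables (R : realType) (n : nat).
Notation E := 'rV[R]_n.

Lemma orth_span (S : E -> Prop) (X : seq E) :
  {in X, forall x, orth S x} -> forall v, v \in <<X>>%VS -> orth S v.
Proof.
elim: X => [|x X IH] SX v.
  by rewrite span_nil memv0 => /eqP -> y _; rewrite dotv0l.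
rewrite span_cons => /memv_addP [u /vlineP [k ->] [w Xw ->]] y Sy.
rewrite dotvDl dotvZl (SX x) ?mem_head // mulr0 add0r.
by apply: IH => // z Xz; apply: SX; rewrite inE Xz orbT.
Qed.

Lemma free_size (X : seq E) : free X -> (size X <= n)%N.
Proof.
by move=> /eqP <-; have := dimvS (subvf <<X>>%VS); rewrite dimvf /dim /= mul1n.
Qed.

Lemma no_infinite_facial_run (Ft : E -> Prop) (F : nat -> E -> Prop) :
  ~ (forall i, facial_step Ft (F i) (F i.+1)).
Proof.
move=> run; have [d dP] := choice run.
have F_sub i j x : (i <= j)%N -> F j x -> F i x.
  by move=> /subnK <-; elim: (j - i)%N => // k IH; rewrite addSn (dP _).2 => -[/IH].
have orth_before i j : (i < j)%N -> orth (F j) (d i).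
  by move=> ij x /(F_sub _ _ _ ij); rewrite (dP i).2 => -[].
have free_run k : free (mkseq d k).
  elim: k => [|k IH]; first by rewrite /free span_nil dimv0.
  rewrite mkseqS (@perm_free _ _ _ (d k :: mkseq d k)) ?perm_rcons //.
  rewrite free_cons IH andbT.
  apply/negP => dk_span; have [[_ [dk_not_orth _]] _] := dP k.
  apply: dk_not_orth; apply: (orth_span _ dk_span) => x /mapP [i].
  by rewrite mem_iota add0n => /andP [_ ik] ->; exact: orth_before.
by have := free_size (free_run n.+1); rewrite size_mkseq ltnn.
Qed.

End Termination.

Section Cones.
Variables (R : realType) (n : nat).
Notation E := 'rV[R]_n.
Implicit Types (C K G : E -> Prop) (x y g : E).

Lemma convex_coneZ C x a : convex_cone C -> C x -> 0 <= a -> C (a *: x).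
Proof.
by move=> cC Cx a0; have := cC x x a 0 Cx Cx a0 (lexx _); rewrite scale0r addr0.
Qed.

Lemma convex_coneD C x y : convex_cone C -> C x -> C y -> C (x + y).
Proof.
by move=> cC Cx Cy; have := cC x y 1 1 Cx Cy ler01 ler01; rewrite !scale1r.
Qed.

Lemma convex_cone0 C x : convex_cone C -> C x -> C 0.
Proof. by move=> cC Cx; rewrite -(scale0r x); apply: convex_coneZ. Qed.

Section Face.
Variables (K G : E -> Prop).
Hypotheses (cK : convex_cone K) (fG : is_face K G) (G_neq0 : exists x, G x).

Let GK : forall x, G x -> K x. Proof. by case: fG. Qed.

Let G_mid x y : K x -> K y -> G (2^-1 *: (x + y)) -> G x /\ G y.
Proof. by case: fG => _ [_]; apply. Qed.

Let half_double x : 2^-1 *: (2 *: x + 0) = x.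
Proof. by rewrite addr0 scalerA mulVf ?pnatr_eq0 // scale1r. Qed.

Lemma face0 : G 0.
Proof.
have [x Gx] := G_neq0; have K0 := convex_cone0 cK (GK Gx).
have K2x : K (2 *: x) := convex_coneZ cK (GK Gx) (ler0n _ 2).
by have := G_mid K0 K2x; rewrite addrC half_double => /(_ Gx) [].
Qed.

Lemma face_double g : G g -> G (2 *: g).
Proof.
move=> Gg; have K2g : K (2 *: g) := convex_coneZ cK (GK Gg) (ler0n _ 2).
by have := G_mid K2g (convex_cone0 cK K2g); rewrite half_double => /(_ Gg) [].
Qed.

Lemma faceZ g a : G g -> 0 <= a -> G (a *: g).
Proof.
move=> Gg a0; pose k := Num.Def.archi_bound a.
have G2k : G (2 ^+ k *: g).
  by elim: k => [|k IH]; rewrite ?scale1r // exprS -scalerA; apply: face_double.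
have two_k_gt0 : 0 < 2 ^+ k :> R by rewrite exprn_gt0 ?ltr0n.
have ak : a / 2 ^+ k <= 1 by rewrite ler_pdivrMr // mul1r ltW // upper_nthrootP.
have [_ [cvG _]] := fG.
have := cvG _ _ _ G2k face0 (divr_ge0 a0 (ltW two_k_gt0)) ak.
by rewrite scaler0 addr0 scalerA mulfVK ?gt_eqF.
Qed.

Lemma face_convex_cone : convex_cone G.
Proof.
move=> x y a b Gx Gy a0 b0; have [_ [cvG _]] := fG.
have half_ge0 : 0 <= 2^-1 :> R by rewrite invr_ge0 ler0n.
have half_le1 : 2^-1 <= 1 :> R by rewrite invf_le1 ?ltr0n // ler1n.
have := cvG _ _ _ (faceZ Gx a0) (faceZ Gy b0) half_ge0 half_le1.
have -> : 1 - 2^-1 = 2^-1 :> R by field.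
move=> /faceZ /(_ (ler0n _ 2)).
by rewrite -scalerDr scalerA mulfV ?pnatr_eq0 // scale1r.
Qed.

End Face.

End Cones.

Section DualVector.
Variables (R : realType) (n : nat).
Notation E := 'rV[R]_n.
Implicit Types (C : E -> Prop) (x y z : E).

Definition slice C (j : 'I_n) : E -> Prop := fun x => C x /\ x 0 j = 0.

Section Slice.
Variables (C : E -> Prop) (j : 'I_n).
Hypothesis cC : convex_cone C.

Lemma convex_cone_slice : convex_cone (slice C j).
Proof.
move=> x y a b [Cx x0] [Cy y0] a0 b0; split; first exact: cC.
by rewrite !mxE x0 y0 !mulr0 addr0.
Qed.

Lemma dotv_delta_slice d mu x :
  x 0 j = 0 -> dotv (d + mu *: delta_mx 0 j) x = dotv d x.
Proof. by move=> x0; rewrite dotvDl dotvZl dotv_delta x0 mulr0 addr0. Qed.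

(* Nonnegativity of [d + mu e_j] on rays with [y_j = 1] and on rays with
   [y_j = -1] pins [mu] between [sup {-<d,y>}] and [inf {<d,z>}], and these
   are ordered because [y + z] lies in the slice. *)
Lemma dual_cone_extend d :
  dual_cone (slice C j) d ->
  (exists2 p, C p & 0 < p 0 j) -> (exists2 q, C q & q 0 j < 0) ->
  exists mu, dual_cone C (d + mu *: delta_mx 0 j).
Proof.
move=> d_dual [p Cp p_gt0] [q Cq q_lt0].
pose unit y := `|y 0 j|^-1 *: y.
have C_unit y : C y -> C (unit y).
  by move=> Cy; apply: convex_coneZ; rewrite ?invr_ge0.
have unitE y : y 0 j != 0 -> unit y 0 j = Num.sg (y 0 j).
  by move=> y0; rewrite mxE [X in _ * X]numEsg mulrCA mulVf ?normr_eq0 ?mulr1.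
have unitK y : y 0 j != 0 -> `|y 0 j| *: unit y = y.
  by move=> y0; rewrite scalerA mulfV ?normr_eq0 // scale1r.
pose L : set R := fun r => exists2 y, C y /\ y 0 j = 1 & r = - dotv d y.
have L_ub z : C z -> z 0 j = -1 -> ubound L (dotv d z).
  move=> Cz z1 r [y [Cy y1] ->]; rewrite -subr_ge0 opprK addrC -dotvDr.
  by apply: d_dual; split; [exact: convex_coneD | rewrite mxE y1 z1 subrr].
have [Cp1 Cq1] : C (unit p) /\ C (unit q) by split; apply: C_unit.
have p1 : unit p 0 j = 1 by rewrite unitE ?gtr0_sg ?gt_eqF.
have q1 : unit q 0 j = -1 by rewrite unitE ?ltr0_sg ?lt_eqF.
have L_has_ub : has_ubound L by exists (dotv d (unit q)); apply: L_ub.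
have L_neq0 : (L !=set0)%classic by exists (- dotv d (unit p)), (unit p).
exists (sup L) => y Cy; rewrite dotvDl dotvZl dotv_delta.
have [y0|y_neq0] := eqVneq (y 0 j) 0.
  by rewrite y0 mulr0 addr0; apply: d_dual.
rewrite -(unitK _ y_neq0) dotvZr mxE unitE // mulrCA -mulrDr mulr_ge0 //.
case: (ltgtP (y 0 j) 0) y_neq0 => [y_lt0|y_gt0|->] //= _.
- rewrite ltr0_sg // mulrN1 subr_ge0 ge_sup //.
  by apply: L_ub; [apply: C_unit | rewrite unitE ?ltr0_sg ?lt_eqF].
- rewrite gtr0_sg // mulr1 addrC -[dotv _ _]opprK subr_ge0 ub_le_sup //.
  by exists (unit y); [split; [apply: C_unit | rewrite unitE ?gtr0_sg ?gt_eqF] |].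
Qed.

(* [-v] is a positive combination of [-(s v + t z)], which lies in the
   symmetric slice, and of [z]. *)
Lemma cone_symmetric_of_slice :
  (exists2 p, C p & 0 < p 0 j) -> (exists2 q, C q & q 0 j < 0) ->
  (forall w, slice C j w -> C (- w)) -> forall v, C v -> C (- v).
Proof.
move=> [p Cp p_gt0] [q Cq q_lt0] slice_sym v Cv.
have via z s t : C z -> 0 < s -> 0 < t -> s * v 0 j + t * z 0 j = 0 -> C (- v).
  move=> Cz s_gt0 t_gt0 st0.
  have Cw : C (- (s *: v + t *: z)).
    apply: slice_sym; split; last by rewrite !mxE.
    apply: convex_coneD cC (convex_coneZ cC Cv _) (convex_coneZ cC Cz _);
    exact: ltW.
  have -> : - v = s^-1 *: (- (s *: v + t *: z)) + (t / s) *: z.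
    rewrite scalerN scalerDr !scalerA mulVf ?gt_eqF // scale1r opprD -addrA.
    by rewrite mulrC addNr addr0.
  by apply: cC => //; rewrite ?invr_ge0 ?divr_ge0 // ltW.
case: (ltgtP (v 0 j) 0) => [v_lt0|v_gt0|v0].
- by apply: (via p (p 0 j) (- v 0 j)); rewrite ?oppr_gt0 //; ring.
- by apply: (via q (- q 0 j) (v 0 j)); rewrite ?oppr_gt0 //; ring.
- exact: slice_sym.
Qed.

End Slice.

Lemma dual_cone_pos_supported (k : nat) C : (k <= n)%N -> convex_cone C ->
  (forall x, C x -> forall i : 'I_n, (k <= i)%N -> x 0 i = 0) ->
  (exists2 v, C v & ~ C (- v)) ->
  exists2 d, dual_cone C d & exists2 x, C x & 0 < dotv d x.
Proof.
elim: k C => [|k IH] C kn cC supp [v Cv Cnv].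
  suff v0 : v = 0 by rewrite v0 oppr0 -v0 in Cnv.
  by apply/rowP => i; rewrite mxE; apply: supp.
pose j := Ordinal kn.
have IHj := IH (slice C j) (ltnW kn) (convex_cone_slice (j := j) cC).
have /IHj {}IHj :
    forall x, slice C j x -> forall i : 'I_n, (k <= i)%N -> x 0 i = 0.
  move=> x [Cx x0] i; rewrite leq_eqVlt => /predU1P [ki|]; last exact: supp.
  by have -> : i = j by apply: val_inj; rewrite /= ki.
have slice_asym w : slice C j w -> ~ C (- w) ->
    exists2 v, slice C j v & ~ slice C j (- v).
  by move=> Sw Cnw; exists w => // -[].
case: (pselect (exists2 p, C p & 0 < p 0 j)) => [pos|no_pos];
  case: (pselect (exists2 q, C q & q 0 j < 0)) => [neg|no_neg].
- case: (pselect (forall w, slice C j w -> C (- w))) => [sym|/existsNP [w]].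
    by case: Cnv; apply: (cone_symmetric_of_slice cC pos neg sym).
  move=> /not_implyP [[Cw w0] Cnw].
  have [d d_dual [x [Cx x0] dx]] := IHj (slice_asym w (conj Cw w0) Cnw).
  have [mu mu_dual] := dual_cone_extend cC d_dual pos neg.
  by exists (d + mu *: delta_mx 0 j) => //; exists x; rewrite ?dotv_delta_slice.
- have [p Cp p_gt0] := pos.
  exists (delta_mx 0 j); last by exists p; rewrite ?dotv_delta.
  move=> y Cy; rewrite dotv_delta leNgt; apply/negP => y_lt0.
  by apply: no_neg; exists y.
- have [q Cq q_lt0] := neg; exists (- delta_mx 0 j).
    move=> y Cy; rewrite -scaleN1r dotvZl dotv_delta mulN1r oppr_ge0 leNgt.
    by apply/negP => y_gt0; apply: no_pos; exists y.
  by exists q; rewrite // -scaleN1r dotvZl dotv_delta mulN1r oppr_gt0.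
- have sliceC y : C y -> slice C j y.
    split => //; case: (ltgtP (y 0 j) 0) => // [y_lt0|y_gt0].
      by case: no_neg; exists y.
    by case: no_pos; exists y.
  have [d d_dual [x [Cx _] dx]] := IHj (slice_asym v (sliceC _ Cv) Cnv).
  by exists d => [y /sliceC /d_dual|]; last exists x.
Qed.

Lemma dual_cone_pos C : convex_cone C -> (exists2 v, C v & ~ C (- v)) ->
  exists2 d, dual_cone C d & exists2 x, C x & 0 < dotv d x.
Proof.
move=> cC; apply: dual_cone_pos_supported (leqnn n) cC _.
by move=> x _ i; rewrite leqNgt ltn_ord.
Qed.

End DualVector.

Section Correctness.
Variables (R : realType) (n : nat).
Notation E := 'rV[R]_n.
Variables (K Ft : E -> Prop).
Hypotheses (cK : convex_cone K) (fFt : is_face K Ft) (Ft_neq0 : exists x, Ft x).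

Definition diff_cone (A B : E -> Prop) : E -> Prop :=
  fun z => exists c g, [/\ A c, B g & z = c - g].

Lemma convex_cone_diff A B :
  convex_cone A -> convex_cone B -> convex_cone (diff_cone A B).
Proof.
move=> cA cB _ _ a b [c1 [g1 [A1 B1 ->]]] [c2 [g2 [A2 B2 ->]]] a0 b0.
exists (a *: c1 + b *: c2), (a *: g1 + b *: g2).
by split; [exact: cA | exact: cB | rewrite !scalerBr opprD addrACA].
Qed.

Lemma facial_step_inv F G :
  facial_step Ft F G -> convex_cone F -> (forall x, Ft x -> F x) ->
  [/\ forall x, G x -> F x, convex_cone G & forall x, Ft x -> G x].
Proof.
move=> [e [[_ [_ e_Ft]] ->]] cF FtF; split; first by move=> x [].
- move=> x y a b [Fx ex] [Fy ey] a0 b0; split; first exact: cF.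
  by rewrite /hyp_perp dotvDr !dotvZr ex ey !mulr0 addr0.
- by move=> x Ftx; split; [exact: FtF | exact: e_Ft].
Qed.

Lemma facial_run_inv d (F : nat -> E -> Prop) : F 0%N = K ->
  (forall i, (i < d)%N -> facial_step Ft (F i) (F i.+1)) ->
  [/\ forall x, F d x -> K x, convex_cone (F d) & forall x, Ft x -> F d x].
Proof.
move=> F0 run; elim: d run => [_|d IH run]; first by rewrite F0; case: fFt.
have [FK cF FtF] := IH (fun i id => run i (ltnW id)).
have [FF cF' FtF'] := facial_step_inv (run d (ltnSn d)) cF FtF.
by split => // x /FF /FK.
Qed.

Lemma exists_admissible F x :
  convex_cone F -> (forall y, F y -> K y) -> (forall y, Ft y -> F y) ->
  F x -> ~ Ft x -> exists v, admissible Ft F v.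
Proof.
move=> cF FK FtF Fx Ftnx.
have cFt := face_convex_cone cK fFt Ft_neq0; have Ft0 := face0 cK fFt Ft_neq0.
have in_diff c g : F c -> Ft g -> diff_cone F Ft (c - g) by exists c, g.
have x_diff : diff_cone F Ft x by rewrite -[x]subr0; apply: in_diff.
have Nx_diff : ~ diff_cone F Ft (- x).
  move=> [c [g [Fc Ftg xE]]].
  have gE : x + c = g by rewrite -[x]opprK xE opprB subrK.
  have [_ [_ Ft_mid]] := fFt.
  have [] // := Ft_mid _ _ (FK _ Fx) (FK _ Fc).
  by rewrite gE; apply: (faceZ cK fFt Ft_neq0 Ftg); rewrite invr_ge0 ler0n.
have [e e_dual [_ [c [g [Fc Ftg ->]]] e_pos]] :=
  dual_cone_pos (convex_cone_diff cF cFt) (ex_intro2 _ _ _ x_diff Nx_diff).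
have e_F y : F y -> 0 <= dotv e y.
  by move=> Fy; rewrite -[y]subr0; exact: e_dual (in_diff _ _ Fy Ft0).
have e_Ft : orth Ft e.
  move=> y Fty; apply/eqP; rewrite eq_le (e_F _ (FtF _ Fty)) andbT.
  rewrite -oppr_ge0 -dotvNr -sub0r.
  exact: e_dual (in_diff _ _ (FtF _ Ft0) Fty).
exists e; split; [exact: e_F | split=> // e_orth]; move: e_pos.
by rewrite dotvBr e_orth // e_Ft // subrr ltxx.
Qed.

End Correctness.

Theorem mainTheorem1 (R : realType) (n : nat) (K Ft : 'rV[R]_n -> Prop) :
  convex_cone K -> is_face K Ft -> (exists x, Ft x) ->
  (forall F : nat -> ('rV[R]_n -> Prop),
      F 0%N = K -> exists i : nat, ~ facial_step Ft (F i) (F i.+1)) /\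
  (forall (d : nat) (F : nat -> ('rV[R]_n -> Prop)),
      F 0%N = K ->
      (forall i : nat, (i < d)%N -> facial_step Ft (F i) (F i.+1)) ->
      ~ (exists v, admissible Ft (F d) v) ->
      F d = Ft).
Proof.
move=> cK fFt Ft_neq0; split=> [F _ | d F F0 run stop].
  by apply/existsNP; apply: no_infinite_facial_run.
have [FK cF FtF] := facial_run_inv cK fFt F0 run.
apply/funext => x; apply/propext; split=> [Fx|]; last exact: FtF.
exact (contra_notP (exists_admissible cK fFt Ft_neq0 cF FK FtF Fx) stop).
Qed.
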